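(* Let $n, r$ be positive integers and let $c: E(G)\to\mathbb{R}$ be a proper edge coloring of a graph $G$. Then there is a proper edge coloring $\widehat{c}: E(G\square K_n)\to\mathbb{R}$ such that $$\dim W_{\widehat{c}}(G\square K_n, r)\geqslant\sum_{t=0}^{n-1}\dim W_c(G, r-t),$$ where $W_c(G, i)$ is defined to be $\{0\}$ if $i\leqslant0$.
   Context: All graphs are finite, simple and undirected; $K_n$ is the complete graph on $n$ vertices. The Cartesian product $G\square H$ has vertex set $V(G)\times V(H)$, with $(g_1,h_1)$ adjacent to $(g_2,h_2)$ iff either $g_1=g_2$ and $h_1h_2\in E(H)$, or $h_1=h_2$ and $g_1g_2\in E(G)$. For a positive integer $r$ and a graph $G$ with a proper edge coloring $c: E(G)\to\mathbb{R}$, $W_c(G,r)$ is the real vector space of all functions $\phi: E(G)\to\mathbb{R}$ for which there exist real polynomials $\{P_v(x)\}_{v\in V(G)}$ with $\deg P_v\leqslant r-1$ for every vertex $v$ and $P_u(c(uv))=P_v(c(uv))=\phi(uv)$ for every edge $uv\in E(G)$. *)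

From HB Require Import structures.
From mathcomp Require Import all_boot all_order all_algebra.
From mathcomp Require Import boolp reals.
Set Implicit Arguments. Unset Strict Implicit. Unset Printing Implicit Defensive.
Import Order.TTheory GRing.Theory Num.Theory.
Local Open Scope ring_scope.

Definition simple_graph (V : finType) (e : rel V) : Prop :=
  symmetric e /\ irreflexive e.

Definition is_edge (V : finType) (e : rel V) : pred {set V} :=
  fun A => [exists u, exists v, e u v && (A == [set u; v])].

Definition Edge (V : finType) (e : rel V) : finType := {A : {set V} | is_edge e A}.

Definition proper_coloring (R : realType) (V : finType) (e : rel V)
  (c : Edge e -> R) : Prop :=
  forall A B : Edge e, A != B ->
    (exists v, (v \in val A) && (v \in val B)) -> c A != c B.

(* phi \in W_c(G, r): there are polynomials P_v with deg P_v <= r - 1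
   (i.e. size (P v) <= r; for r = 0 only the zero polynomial) such that
   P_u(c(uv)) = P_v(c(uv)) = phi(uv) for every edge uv. *)
Definition inW (R : realType) (V : finType) (e : rel V) (c : Edge e -> R)
  (r : nat) (phi : {ffun Edge e -> R^o}) : Prop :=
  exists P : V -> {poly R},
    (forall v, (size (P v) <= r)%N) /\
    (forall (A : Edge e) (u : V), u \in val A -> (P u).[c A] = phi A).

(* dim W_c(G, r): the maximal size of a linearly independent family of
   elements of W_c(G, r) in the space of functions E(G) -> R. *)
Definition dimW (R : realType) (V : finType) (e : rel V) (c : Edge e -> R)
  (r : nat) : nat :=
  \max_(k < (\dim (@fullv R {ffun Edge e -> R^o})).+1 |
        `[< exists X : k.-tuple {ffun Edge e -> R^o},
              free X /\ forall i : 'I_k, inW c r (tnth X i) >]) k.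

Definition cart_Kn (V : finType) (e : rel V) (n : nat) : rel (V * 'I_n) :=
  fun x y => ((x.1 == y.1) && (x.2 != y.2)) || ((x.2 == y.2) && e x.1 y.1).
Arguments cart_Kn {V} e n.

(* Color the copy of E(G) in layer i of G □ K_n by c, and the edge {(v,i),(v,j)} by
   a_i + a_j, where the a_i are distinct and exceed every color of c.  If the P_v witness
   x in W_c(G, r - t), then the polynomials P_v(X) (a_i (X - a_i))^t at the vertices (v,i)
   have degree < r and agree on every edge, because at X = a_i + a_j the second factor is
   (a_i a_j)^t, symmetric in i and j.  On the copy of an edge E in layer j their common value
   is x(E) y_{E,j}^t with y_{E,j} = a_j (c(E) - a_j); these nodes are distinct in j, so by
   Vandermonde the lifts of bases of W_c(G, r - t), t < n, are jointly independent already
   on the horizontal edges. *)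

From HB Require Import structures.
From mathcomp Require Import all_boot all_order all_algebra.
From mathcomp Require Import boolp reals.
From mathcomp Require Import zify ring lra.
Import Order.TTheory GRing.Theory Num.Theory.
Set Implicit Arguments. Unset Strict Implicit. Unset Printing Implicit Defensive.
Local Open Scope ring_scope.

Section FreeFamilies.
Variables (K : fieldType) (aT rT : vectType K).

Lemma free_of_map_free (f : 'Hom(aT, rT)) (X : seq aT) : free (map f X) -> free X.
Proof.
rewrite /free size_map -limg_span => /eqP dim_fX.
by rewrite eqn_leq dim_span -dim_fX -(limg_ker_dim f <<X>>) leq_addl.
Qed.

Lemma bigcat_map_free (I : finType) (L : I -> 'Hom(aT, rT)) (Xs : I -> seq aT) :
  (forall u : I -> aT, \sum_i L i (u i) = 0 -> forall i, u i = 0) ->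
  (forall i, free (Xs i)) -> free (\big[cat/[::]]_i map (L i) (Xs i)).
Proof.
move=> L_inj Xs_free; apply: bigcat_free => [|i _].
  apply/directv_sum_independent => us us_img sum_us0 i _.
  have usK j : L j ((L j)^-1%VF (us j)) = us j.
    apply: limg_lfunVK; apply: subvP (us_img j isT).
    by rewrite -limg_span limgS ?subvf.
  have := L_inj (fun j => (L j)^-1%VF (us j)).
  by rewrite (eq_bigr _ (fun j _ => usK j)) -(usK i) => /(_ sum_us0 i) ->; rewrite linear0.
have /lker0P L_inj_i : injective (L i).
  move=> u v Luv; apply/eqP; rewrite -subr_eq0; apply/eqP.
  have := L_inj (fun j => if j == i then u - v else 0) _ i; rewrite eqxx; apply.
  rewrite (bigD1 i) //= eqxx big1 => [|j /negbTE ->]; last exact: linear0.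
  by rewrite linearB /= Luv subrr addr0.
apply: (@basis_free _ _ (L i @: <<Xs i>>)%VS); apply: limg_basis_of.
  by rewrite (eqP L_inj_i) capv0.
by rewrite /basis_of eqxx Xs_free.
Qed.

Lemma free_lift (f : 'Hom(aT, rT)) (P : aT -> Prop) (S : seq rT) :
  free S -> (forall s, s \in S -> exists2 u, P u & f u = s) ->
  exists T : seq aT, [/\ size T = size S, free T & forall u, u \in T -> P u].
Proof.
move=> S_free S_lift.
have [T [fT PT]] : exists T, map f T = S /\ forall u, u \in T -> P u.
  elim: S {S_free} S_lift => [|s S IH] S_lift; first by exists [::].
  have [u Pu fu] := S_lift s (mem_head _ _).
  have [T [fT PT]] : exists T, map f T = S /\ forall u, u \in T -> P u.
    by apply: IH => s' s'S; apply: S_lift; rewrite inE s'S orbT.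
  by exists (u :: T); split=> [|v /predU1P [->|/PT]]; rewrite //= fu fT.
exists T; split=> //; first by rewrite -fT size_map.
by apply: (free_of_map_free (f := f)); rewrite fT.
Qed.

End FreeFamilies.

Lemma vandermonde_coefs_eq0 (F : fieldType) (n : nat) (y k : 'I_n -> F) :
  injective y -> (forall j, \sum_(t < n) k t * y j ^+ t = 0) -> forall t, k t = 0.
Proof.
move=> y_inj k_root t.
pose Vm := Vandermonde n (\row_j y j).
have Vm_unit : Vm \in unitmx.
  rewrite unitmxE det_Vandermonde unitfE; apply/prodf_neq0 => i _.
  apply/prodf_neq0 => j lt_ij; rewrite !mxE subr_eq0.
  by apply: contraTneq lt_ij => /y_inj ->; rewrite ltnn.
have : \row_t k t *m Vm = 0.
  apply/rowP => j; rewrite !mxE -[RHS](k_root j).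
  by apply: eq_bigr => i _; rewrite !mxE.
move=> /(congr1 (mulmx^~ (invmx Vm))); rewrite mulmxK // mul0mx.
by move=> /rowP /(_ t); rewrite !mxE.
Qed.

Section Pullback.
Variables (K : fieldType) (A B : finType) (g : B -> A) (w : B -> K).

Definition pullback_fun (x : {ffun A -> K^o}) : {ffun B -> K^o} :=
  [ffun b => x (g b) * w b].

Fact pullback_fun_is_linear : linear pullback_fun.
Proof. by move=> a x y; apply/ffunP => b; rewrite !ffunE mulrDl -mulrA. Qed.

HB.instance Definition _ :=
  GRing.isLinear.Build K _ _ _ pullback_fun pullback_fun_is_linear.

Definition pullback : 'Hom({ffun A -> K^o}, {ffun B -> K^o}) := linfun pullback_fun.

Lemma pullbackE x b : pullback x b = x (g b) * w b.
Proof. by rewrite lfunE ffunE. Qed.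

End Pullback.

Section Dimension.
Variables (R : realType) (V : finType) (e : rel V) (c : Edge e -> R) (r : nat).

Lemma dimW_ge_free (S : seq {ffun Edge e -> R^o}) :
  free S -> (forall x, x \in S -> inW c r x) -> (size S <= dimW c r)%N.
Proof.
move=> S_free S_W.
have S_small : (size S < (\dim (@fullv R {ffun Edge e -> R^o})).+1)%N.
  by rewrite ltnS -(eqP S_free) dimvS ?subvf.
apply: (@leq_bigmax_cond _ _ (fun k : 'I_ _ => nat_of_ord k) (Ordinal S_small)).
by apply: asboolT; exists (in_tuple S); split=> // i; apply: S_W; exact: mem_tnth.
Qed.

Lemma dimW_witness : exists S : seq {ffun Edge e -> R^o},
  [/\ size S = dimW c r, free S & forall x, x \in S -> inW c r x].
Proof.
have nil_ok : `[< exists X : 0.-tuple {ffun Edge e -> R^o},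
                    free X /\ forall i, inW c r (tnth X i) >].
  by apply: asboolT; exists [tuple]; split; [exact: nil_free | case].
rewrite /dimW (bigop.bigmax_eq_arg ord0 nil_ok).
case: arg_maxnP => // k /asboolW [X [X_free X_W]] _.
by exists X; split=> [||x /tnthP [i ->]]; rewrite ?size_tuple.
Qed.

End Dimension.

Section Edges.
Variables (T : finType) (r : rel T).

Lemma is_edge_set2 u v : r u v -> is_edge r [set u; v].
Proof.
by move=> ruv; apply/existsP; exists u; apply/existsP; exists v; rewrite ruv eqxx.
Qed.

Definition edge_of u v (ruv : r u v) : Edge r := exist (is_edge r) _ (is_edge_set2 ruv).

Lemma edgeP (A : Edge r) : exists u v, r u v /\ val A = [set u; v].
Proof. by case: A => B /= /existsP [u /existsP [v /andP [ruv /eqP ->]]]; exists u, v. Qed.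

Lemma edge_through (A : Edge r) w : symmetric r -> w \in val A ->
  exists x, r w x /\ val A = [set w; x].
Proof.
move=> r_sym; have [u [v [ruv ->]]] := edgeP A; case/set2P => ->; first by exists v.
by exists u; rewrite r_sym setUC.
Qed.

End Edges.

Section EdgeValues.
Variables (R : realType) (T : finType) (r : rel T) (col : Edge r -> R) (Q : T -> {poly R}).

Definition agrees_on_edges : Prop :=
  forall (A : Edge r) u v, u \in val A -> v \in val A -> (Q u).[col A] = (Q v).[col A].

Definition edge_values : {ffun Edge r -> R^o} :=
  [ffun A : Edge r => (if [pick z in val A] is Some z then (Q z).[col A] else 0 : R^o)].

Hypothesis Q_agrees : agrees_on_edges.

Lemma edge_valuesE (A : Edge r) u : u \in val A -> edge_values A = (Q u).[col A].
Proof.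
by move=> uA; rewrite ffunE; case: pickP => [z zA | /(_ u)]; rewrite ?uA // (Q_agrees zA uA).
Qed.

Lemma inW_edge_values k : (forall v, (size (Q v) <= k)%N) -> inW col k edge_values.
Proof. by move=> Q_size; exists Q; split=> // A u uA; rewrite (edge_valuesE uA). Qed.

End EdgeValues.

Section CartesianColoring.
Variables (R : realType) (V : finType) (e : rel V) (n : nat) (c : Edge e -> R).
Hypotheses (e_sym : symmetric e) (e_irr : irreflexive e).

Local Notation ce := (cart_Kn e n).

Definition layer_weight (i : 'I_n) : R := 1 + \sum_(E : Edge e) `|c E| + i%:R.

Lemma color_lt_layer_weightD (E : Edge e) i j : c E < layer_weight i + layer_weight j.
Proof.
have c_le : c E <= \sum_(E' : Edge e) `|c E'|.
  by rewrite (le_trans (ler_norm _)) // (bigD1 E) //= lerDl sumr_ge0.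
have : 0 <= \sum_(E' : Edge e) `|c E'| by rewrite sumr_ge0.
have : 0 <= i%:R :> R by [].
have : 0 <= j%:R :> R by [].
rewrite /layer_weight; lra.
Qed.

Lemma layer_weight_inj : injective layer_weight.
Proof. by move=> i j /addrI /eqP; rewrite eqr_nat => /eqP /val_inj. Qed.

Definition base_color (B : {set V}) : R := if insub B is Some E then c E else 0.

Lemma base_color_val (E : Edge e) : base_color (val E) = c E.
Proof. by rewrite /base_color valK. Qed.

Definition cart_color_set (A : {set V * 'I_n}) : R :=
  if [forall z in A, forall z' in A, z.1 == z'.1] then \sum_(z in A) layer_weight z.2
  else base_color [set z.1 | z in A].

Definition cart_color (A : Edge ce) : R := cart_color_set (val A).

Lemma cart_Kn_sym : symmetric ce.
Proof. by move=> p q; rewrite /cart_Kn [q.1 == _]eq_sym [q.2 == _]eq_sym e_sym. Qed.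

Lemma cart_Kn_irr : irreflexive ce.
Proof. by move=> p; rewrite /cart_Kn !eqxx e_irr. Qed.

Lemma cart_Kn_horizontal p q : ce p q -> p.1 != q.1 -> p.2 = q.2 /\ e p.1 q.1.
Proof. by rewrite /cart_Kn => + /negbTE p1q1; rewrite p1q1 /= => /andP [/eqP]. Qed.

Lemma cart_color_set2 p q : ce p q ->
  cart_color_set [set p; q] =
    if p.1 == q.1 then layer_weight p.2 + layer_weight q.2 else base_color [set p.1; q.1].
Proof.
rewrite /cart_color_set => pq; case: eqP => [p1q1 | /eqP p1q1].
  have p_neq_q : p != q by apply: contraTneq pq => ->; rewrite cart_Kn_irr.
  rewrite ifT ?big_setU1 ?big_set1 ?inE //.
  by apply/forall_inP => z /set2P [] ->; apply/forall_inP => z' /set2P [] ->; rewrite ?p1q1.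
rewrite ifF ?imsetU1 ?imset_set1 //; apply/negbTE.
by apply: contra p1q1 => /forall_inP /(_ p (set21 _ _)) /forall_inP /(_ q (set22 _ _)).
Qed.

Lemma cart_color_proper : proper_coloring c -> proper_coloring cart_color.
Proof.
move=> c_proper A B neqAB [w /andP [wA wB]]; rewrite /cart_color.
have [x [wx defA]] := edge_through cart_Kn_sym wA.
have [y [wy defB]] := edge_through cart_Kn_sym wB.
have neq_xy : x != y.
  by apply: contraNneq neqAB => eq_xy; apply/eqP/val_inj; rewrite defA defB eq_xy.
rewrite defA defB !cart_color_set2 //.
case: (eqVneq w.1 x.1) => [wx1 | nwx1]; case: (eqVneq w.1 y.1) => [wy1 | nwy1].
- rewrite (inj_eq (addrI _)) (inj_eq layer_weight_inj).
  apply: contraNneq neq_xy => xy2.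
  by rewrite [x]surjective_pairing [y]surjective_pairing -wx1 -wy1 xy2.
- have [_ ewy] := cart_Kn_horizontal wy nwy1.
  by rewrite (base_color_val (edge_of ewy)) gt_eqF ?color_lt_layer_weightD.
- have [_ ewx] := cart_Kn_horizontal wx nwx1.
  by rewrite (base_color_val (edge_of ewx)) lt_eqF ?color_lt_layer_weightD.
have [wx2 ewx] := cart_Kn_horizontal wx nwx1.
have [wy2 ewy] := cart_Kn_horizontal wy nwy1.
rewrite (base_color_val (edge_of ewx)) (base_color_val (edge_of ewy)).
apply: c_proper; last by exists w.1; rewrite !inE eqxx.
apply: contraNneq neq_xy => /(congr1 val) /setP /(_ x.1) /=.
rewrite !inE eqxx orbT eq_sym (negbTE nwx1) /= => /esym /eqP x1y1.
by rewrite [x]surjective_pairing [y]surjective_pairing x1y1 -wx2 -wy2.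
Qed.

Lemma layer_edge_is_edge (E : Edge e) j : is_edge ce [set (u, j) | u in val E].
Proof.
have [u [v [euv ->]]] := edgeP E; rewrite imsetU1 imset_set1.
by apply: is_edge_set2; rewrite /cart_Kn /= eqxx euv orbT.
Qed.

Definition layer_edge (E : Edge e) j : Edge ce :=
  exist (is_edge ce) _ (layer_edge_is_edge E j).

Lemma cart_color_layer_edge (E : Edge e) j : cart_color (layer_edge E j) = c E.
Proof.
have [u [v [euv defE]]] := edgeP E.
have ce_uv : ce (u, j) (v, j) by rewrite /cart_Kn /= eqxx euv orbT.
have neq_uv : u != v by apply: contraTneq euv => ->; rewrite e_irr.
rewrite /cart_color /= defE imsetU1 imset_set1 cart_color_set2 //= (negbTE neq_uv).
by rewrite -defE base_color_val.
Qed.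

Definition layer_poly (t : nat) (i : 'I_n) : {poly R} :=
  layer_weight i ^+ t *: ('X - (layer_weight i)%:P) ^+ t.

Lemma layer_polyE t i y :
  (layer_poly t i).[y] = (layer_weight i * (y - layer_weight i)) ^+ t.
Proof. by rewrite /layer_poly hornerZ horner_exp hornerXsubC exprMn. Qed.

Lemma size_layer_poly t i : (size (layer_poly t i) <= t.+1)%N.
Proof. by rewrite (leq_trans (size_scale_leq _ _)) // size_exp_XsubC. Qed.

Definition lift_poly (P : V -> {poly R}) (t : nat) (z : V * 'I_n) : {poly R} :=
  P z.1 * layer_poly t z.2.

Lemma lift_poly_agrees P t :
  agrees_on_edges c P -> agrees_on_edges cart_color (lift_poly P t).
Proof.
move=> P_agrees A z z' zA; have [x [zx defA]] := edge_through cart_Kn_sym zA.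
rewrite defA => /set2P [-> // | ->]; rewrite /cart_color defA cart_color_set2 //.
rewrite /lift_poly !hornerM !layer_polyE; case: (eqVneq z.1 x.1) => [zx1 | nzx1].
  by rewrite zx1; congr (_ * _ ^+ _); ring.
have [zx2 ezx] := cart_Kn_horizontal zx nzx1.
rewrite (base_color_val (edge_of ezx)) zx2.
by rewrite (P_agrees (edge_of ezx) _ _ (set21 _ _) (set22 _ _)).
Qed.

Lemma size_lift_poly (P : V -> {poly R}) (r t : nat) (z : V * 'I_n) :
  (size (P z.1) <= r - t)%N -> (size (lift_poly P t z) <= r)%N.
Proof.
rewrite /lift_poly; have [->|P_nz] := eqVneq (P z.1) 0; first by rewrite mul0r size_poly0.
have := size_mul_leq (P z.1) (layer_poly t z.2); have := size_layer_poly t z.2.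
have : (0 < size (P z.1))%N by rewrite size_poly_gt0.
lia.
Qed.

Definition layer_node (Ej : Edge e * 'I_n) : R :=
  layer_weight Ej.2 * (c Ej.1 - layer_weight Ej.2).

Definition restrict_layers : 'Hom({ffun Edge ce -> R^o}, {ffun Edge e * 'I_n -> R^o}) :=
  pullback (fun Ej : Edge e * 'I_n => layer_edge Ej.1 Ej.2) (fun _ => 1).

Definition scale_layers (t : nat) : 'Hom({ffun Edge e -> R^o}, {ffun Edge e * 'I_n -> R^o}) :=
  pullback fst (fun Ej => layer_node Ej ^+ t).

Lemma lift_inW r t x : inW c (r - t) x ->
  exists2 y, inW cart_color r y & restrict_layers y = scale_layers t x.
Proof.
move=> [P [P_size P_val]].
have P_agrees : agrees_on_edges c P by move=> A u v uA vA; rewrite !P_val.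
have Q_agrees := lift_poly_agrees t P_agrees.
exists (edge_values cart_color (lift_poly P t)).
  by apply: inW_edge_values => // z; apply: size_lift_poly.
apply/ffunP => -[E j]; rewrite !pullbackE mulr1 /=.
have [u [v [_ defE]]] := edgeP E.
have uE : u \in val E by rewrite defE set21.
rewrite (edge_valuesE Q_agrees (_ : (u, j) \in val (layer_edge E j))) ?imset_f //.
by rewrite /lift_poly hornerM cart_color_layer_edge layer_polyE P_val.
Qed.

Lemma layer_node_inj (E : Edge e) : injective (fun j => layer_node (E, j)).
Proof.
move=> i j /eqP; rewrite /layer_node /= -subr_eq0.
set ai := layer_weight i; set aj := layer_weight j.
have -> : ai * (c E - ai) - aj * (c E - aj) = (ai - aj) * (c E - (ai + aj)) by ring.
rewrite mulf_eq0 !subr_eq0 (lt_eqF (color_lt_layer_weightD E i j)) orbF.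
by move/eqP/layer_weight_inj.
Qed.

Lemma scale_layers_jointly_injective : forall u : 'I_n -> {ffun Edge e -> R^o},
  \sum_(t < n) scale_layers t (u t) = 0 -> forall t, u t = 0.
Proof.
move=> u sum0 t; apply/ffunP => E; rewrite ffunE; move: t.
apply: (vandermonde_coefs_eq0 (k := fun t => u t E) (@layer_node_inj E)) => j.
have := congr1 (fun f : {ffun _ -> R^o} => f (E, j)) sum0.
rewrite sum_ffunE ffunE => sum0_at.
by rewrite -[RHS]sum0_at; apply: eq_bigr => t _; rewrite pullbackE.
Qed.

Lemma lift_layers r (X : 'I_n -> seq {ffun Edge e -> R^o}) :
  (forall t x, x \in X t -> inW c (r - t) x) ->
  forall s, s \in \big[cat/[::]]_(t < n) map (scale_layers t) (X t) ->
  exists2 y, inW cart_color r y & restrict_layers y = s.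
Proof.
move=> X_W s; apply: (big_ind (fun S => s \in S -> exists2 y, inW cart_color r y &
  restrict_layers y = s)) => // [S1 S2 IH1 IH2 | t _].
  by rewrite mem_cat => /orP [/IH1 | /IH2].
by move=> /mapP [x /X_W xW ->]; apply: lift_inW.
Qed.

End CartesianColoring.

Theorem lemma3p4 (R : realType) (V : finType) (e : rel V) (n r : nat)
  (c : Edge e -> R) :
  simple_graph e -> (0 < n)%N -> (0 < r)%N -> proper_coloring c ->
  exists chat : Edge (cart_Kn e n) -> R,
    proper_coloring chat /\
    (\sum_(t < n) dimW c (r - t)%N <= dimW chat r)%N.
Proof.
move=> [e_sym e_irr] _ _ c_proper.
exists (cart_color c); split; first exact: cart_color_proper.
have /choice [X X_ok] : forall t : 'I_n, exists X : seq {ffun Edge e -> R^o},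
    [/\ size X = dimW c (r - t), free X & forall x, x \in X -> inW c (r - t) x].
  by move=> t; apply: dimW_witness.
have X_W t x : x \in X t -> inW c (r - t) x by have [_ _] := X_ok t; apply.
pose S := \big[cat/[::]]_(t < n) map (scale_layers n c t) (X t).
have S_free : free S.
  apply: bigcat_map_free (@scale_layers_jointly_injective _ _ _ n c) _ => t.
  by have [] := X_ok t.
have S_size : size S = (\sum_(t < n) dimW c (r - t))%N.
  rewrite (big_morph _ (@size_cat _) (erefl (size [::]))); apply: eq_bigr => t _.
  by rewrite size_map; have [] := X_ok t.
have [T [T_size T_free T_W]] := free_lift S_free (lift_layers e_sym e_irr X_W).
by rewrite -S_size -T_size; apply: dimW_ge_free.
Qed.
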